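(* Let $\Bbbk$ be a field, let $\mathrm{Var}$ be a variety of $\Bbbk$-algebras with one binary product defined by a set of polylinear identities. Let $X$ be a set, $\dot X=\{\dot x\mid x\in X\}$ a disjoint copy of $X$, $F=\mathrm{Var}\langle X\cup\dot X\rangle$ the free $\mathrm{Var}$-algebra on $X\cup\dot X$, and $\varphi:F\to F$ the algebra homomorphism with $\varphi(x)=\varphi(\dot x)=x$ for $x\in X$. Equip $F$ with the operations $f\vdash g=\varphi(f)g$, $f\dashv g=f\varphi(g)$, $f\perp g=fg$, obtaining the system $F^{(3)}$. Then the subalgebra $V$ of $F^{(3)}$ generated by $\dot X$ (i.e. the smallest subspace containing $\dot X$ and closed under $\vdash,\dashv,\perp$) coincides with the subspace $W$ of $F$ spanned by all monomials $u$ with $\deg_{\dot X}u>0$.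
   Context: Monomials of $F$ are the images of nonassociative words (bracketed products) in the alphabet $X\cup\dot X$; since the defining identities of $\mathrm{Var}$ are polylinear, $F$ is graded by degree in each letter, and $\deg_{\dot X}u$ denotes the total number of occurrences of letters from $\dot X$ in the monomial $u$. *)

From HB Require Import structures.
From mathcomp Require Import all_boot all_order all_algebra.
Set Implicit Arguments. Unset Strict Implicit. Unset Printing Implicit Defensive.
Import GRing.Theory.
Local Open Scope ring_scope.

Inductive word (T : Type) : Type :=
| Leaf of T
| Node of word T & word T.
Arguments Leaf {T} _.
Arguments Node {T} _ _.

Fixpoint leaves (T : Type) (w : word T) : seq T :=
  match w with Leaf t => [:: t] | Node u v => leaves u ++ leaves v end.

(* number of letters of the word lying in the second copy (inr = dotted letters) *)
Fixpoint deg_dot (X : Type) (w : word (X + X)) : nat :=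
  match w with
  | Leaf (inl _) => 0%N
  | Leaf (inr _) => 1%N
  | Node u v => (deg_dot u + deg_dot v)%N
  end.

Record naalg (k : fieldType) := NAAlg {
  na_carrier :> lmodType k;
  na_mul : na_carrier -> na_carrier -> na_carrier;
  na_mulDl : forall (c : k) x y z, na_mul (c *: x + y) z = c *: na_mul x z + na_mul y z;
  na_mulDr : forall (c : k) x y z, na_mul z (c *: x + y) = c *: na_mul z x + na_mul z y
}.
Arguments na_mul {k} _ _ _.

Fixpoint eval_word (k : fieldType) (A : naalg k) (T : Type) (a : T -> A) (w : word T) : A :=
  match w with
  | Leaf t => a t
  | Node u v => na_mul A (eval_word a u) (eval_word a v)
  end.

(* A nonassociative polynomial in the variables 'I_n: finite linear combination of words. *)
Definition napoly (k : fieldType) (n : nat) := seq (k * word 'I_n).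

Definition polylinear (k : fieldType) (n : nat) (p : napoly k n) : Prop :=
  all (fun m : k * word 'I_n => perm_eq (leaves m.2) (enum 'I_n)) p.

Definition eval_poly (k : fieldType) (A : naalg k) (n : nat) (p : napoly k n)
  (a : 'I_n -> A) : A :=
  \sum_(m <- p) m.1 *: eval_word a m.2.

(* A set of identities: Ids n p means p (in n variables) is one of the defining identities. *)
Definition identities (k : fieldType) := forall n : nat, napoly k n -> Prop.

Definition in_var (k : fieldType) (Ids : identities k) (A : naalg k) : Prop :=
  forall n (p : napoly k n), Ids n p -> forall a : 'I_n -> A, eval_poly p a = 0.

Definition is_hom (k : fieldType) (A B : naalg k) (f : A -> B) : Prop :=
  (forall (c : k) x y, f (c *: x + y) = c *: f x + f y) /\
  (forall x y, f (na_mul A x y) = na_mul B (f x) (f y)).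

Definition is_free_var (k : fieldType) (Ids : identities k) (S : Type)
  (A : naalg k) (iota : S -> A) : Prop :=
  in_var Ids A /\
  forall (B : naalg k), in_var Ids B -> forall f : S -> B,
    exists g : A -> B, [/\ is_hom g, (forall s, g (iota s) = f s) &
      forall g' : A -> B, is_hom g' -> (forall s, g' (iota s) = f s) ->
        forall x, g' x = g x].

Inductive span_of (k : fieldType) (V : lmodType k) (S : V -> Prop) : V -> Prop :=
| span0 : span_of S 0
| spanS s : S s -> span_of S s
| spanD a b : span_of S a -> span_of S b -> span_of S (a + b)
| spanZ (c : k) a : span_of S a -> span_of S (c *: a).

(* subalgebra of F^(3) generated by G: smallest subspace containing G closed under
   f |- g = phi(f) g,  f -| g = f phi(g),  f _|_ g = f g *)
Inductive gen3 (k : fieldType) (A : naalg k) (phi : A -> A) (G : A -> Prop) : A -> Prop :=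
| gen3G g : G g -> gen3 phi G g
| gen30 : gen3 phi G 0
| gen3D a b : gen3 phi G a -> gen3 phi G b -> gen3 phi G (a + b)
| gen3Z (c : k) a : gen3 phi G a -> gen3 phi G (c *: a)
| gen3L a b : gen3 phi G a -> gen3 phi G b -> gen3 phi G (na_mul A (phi a) b)
| gen3R a b : gen3 phi G a -> gen3 phi G b -> gen3 phi G (na_mul A a (phi b))
| gen3P a b : gen3 phi G a -> gen3 phi G b -> gen3 phi G (na_mul A a b).

From mathcomp Require Import all_boot all_order all_algebra.
Import GRing.Theory.

(* φ erases the dots, so φ maps monomials to monomials; each of the three
   products of two elements of V therefore multiplies a monomial by a monomial
   containing a dotted letter, and stays in W.  Conversely, let uv be a monomial
   with a dotted letter.  If both factors contain one, uv = u ⊥ v.  If u has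
   none, then u = φ(u') where u' is u with every letter dotted; u' lies in V
   (it is a ⊥-product of generators), so uv = u' ⊢ v, and symmetrically with ⊣. *)

Set Implicit Arguments.
Unset Strict Implicit.
Unset Printing Implicit Defensive.

Local Open Scope ring_scope.

Section LinearSpan.
Variable k : fieldType.

Definition lin_fun (U V : lmodType k) (f : U -> V) : Prop :=
  forall c x y, f (c *: x + y) = c *: f x + f y.

Section LinFun.
Variables (U V : lmodType k) (f : U -> V).
Hypothesis f_lin : lin_fun f.

Lemma lin_fun0 : f 0 = 0.
Proof.
have := f_lin 1 0 0; rewrite !scale1r addr0 => f0.
by apply/eqP; rewrite -(subrr (f 0)) {2}f0 addrK.
Qed.

Lemma lin_funD x y : f (x + y) = f x + f y.
Proof. by have := f_lin 1 x y; rewrite !scale1r. Qed.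

Lemma lin_funZ c x : f (c *: x) = c *: f x.
Proof. by rewrite -[c *: x]addr0 f_lin lin_fun0 addr0. Qed.

Lemma span_of_lin_image (P : U -> Prop) (Q : V -> Prop) a :
  span_of P a -> (forall x, P x -> span_of Q (f x)) -> span_of Q (f a).
Proof.
move=> Pa PQ; elim: Pa => [|x /PQ//|x y _ Qx _ Qy|c x _ Qx].
- by rewrite lin_fun0; apply: span0.
- by rewrite lin_funD; apply: spanD.
- by rewrite lin_funZ; apply: spanZ.
Qed.

End LinFun.

Lemma span_of_mul (A : naalg k) (P Q R : A -> Prop) a b :
  span_of P a -> span_of Q b ->
  (forall x y, P x -> Q y -> span_of R (na_mul A x y)) ->
  span_of R (na_mul A a b).
Proof.
move=> Pa Qb PQR.
apply: (span_of_lin_image (f := na_mul A^~ b) _ Pa) => [c x y|x Px].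
  exact: na_mulDl.
apply: (span_of_lin_image (f := na_mul A x) _ Qb) => [c y z|y Qy].
  exact: na_mulDr.
exact: PQR.
Qed.

End LinearSpan.

Fixpoint wmap (T U : Type) (f : T -> U) (w : word T) : word U :=
  match w with Leaf t => Leaf (f t) | Node u v => Node (wmap f u) (wmap f v) end.

Section EvalWord.
Variables (k : fieldType) (A : naalg k).

Lemma eq_eval_word (T : Type) (a b : T -> A) u :
  a =1 b -> eval_word a u = eval_word b u.
Proof. by move=> ab; elim: u => [t|u IHu v IHv] /=; rewrite ?ab ?IHu ?IHv. Qed.

Lemma eval_wmap (T U : Type) (a : U -> A) (f : T -> U) u :
  eval_word a (wmap f u) = eval_word (a \o f) u.
Proof. by elim: u => //= u IHu v IHv; rewrite IHu IHv. Qed.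

Lemma eval_word_hom (B : naalg k) (f : A -> B) (T : Type) (a : T -> A) u :
  is_hom f -> f (eval_word a u) = eval_word (f \o a) u.
Proof. by move=> [_ fM]; elim: u => //= u IHu v IHv; rewrite fM IHu IHv. Qed.

Lemma eval_word_deg_dot0 (X : Type) (a b : X + X -> A) u :
  deg_dot u = 0%N -> (forall x, a (inl x) = b (inl x)) ->
  eval_word a u = eval_word b u.
Proof.
move=> u0 ab; elim: u u0 => [[x|x]|u IHu v IHv] //=.
by move/eqP; rewrite addn_eq0 => /andP[/eqP/IHu-> /eqP/IHv->].
Qed.

Lemma gen3_eval_word (phi : A -> A) (G : A -> Prop) (T : Type) (a : T -> A) u :
  (forall t, G (a t)) -> gen3 phi G (eval_word a u).
Proof. by move=> Ga; elim: u => [t|u IHu v IHv] /=; [apply: gen3G|apply: gen3P]. Qed.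

End EvalWord.

Definition undot (X : Type) (s : X + X) : X + X :=
  match s with inl x | inr x => inl x end.

Definition dot (X : Type) (s : X + X) : X + X :=
  match s with inl x | inr x => inr x end.

Section DottedSubalgebra.
Variables (k : fieldType) (X : Type) (F : naalg k) (iota : X + X -> F).
Variable phi : F -> F.
Hypothesis phi_hom : is_hom phi.
Hypothesis phi_x : forall x, phi (iota (inl x)) = iota (inl x).
Hypothesis phi_xdot : forall x, phi (iota (inr x)) = iota (inl x).

Local Notation monomial := (eval_word iota).
Local Notation V := (gen3 phi (fun g => exists x, g = iota (inr x))).
Local Notation W :=
  (span_of (fun g => exists u : word (X + X), (0 < deg_dot u)%N /\ g = monomial u)).
Local Notation M := (span_of (fun g => exists u : word (X + X), g = monomial u)).

Lemma phi_monomial u : phi (monomial u) = monomial (wmap (@undot X) u).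
Proof.
rewrite eval_word_hom // eval_wmap; apply: eq_eval_word => -[] x /=.
  exact: phi_x.
exact: phi_xdot.
Qed.

Lemma phi_dot_monomial u :
  deg_dot u = 0%N -> phi (eval_word (iota \o @dot X) u) = monomial u.
Proof. by move=> u0; rewrite eval_word_hom //; apply: eval_word_deg_dot0. Qed.

Lemma phi_dot_span a : W a -> M (phi a).
Proof.
move=> Wa; apply: (span_of_lin_image phi_hom.1 Wa) => _ [u [_ ->]].
by apply: spanS; exists (wmap (@undot X) u); rewrite phi_monomial.
Qed.

Lemma gen3_dot_sub_span a : V a -> W a.
Proof.
elim=> [_ [x ->]| |a1 a2 _ W1 _ W2|c a1 _ W1|a1 a2 _ W1 _ W2|a1 a2 _ W1 _ W2|a1 a2 _ W1 _ W2].
- by apply: spanS; exists (Leaf (inr x)).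
- exact: span0.
- exact: spanD.
- exact: spanZ.
- apply: span_of_mul (phi_dot_span W1) W2 _ => _ _ [u ->] [v [v_dot ->]].
  by apply: spanS; exists (Node u v); rewrite /= addn_gt0 v_dot orbT.
- apply: span_of_mul W1 (phi_dot_span W2) _ => _ _ [u [u_dot ->]] [v ->].
  by apply: spanS; exists (Node u v); rewrite /= addn_gt0 u_dot.
- apply: span_of_mul W1 W2 _ => _ _ [u [u_dot ->]] [v [_ ->]].
  by apply: spanS; exists (Node u v); rewrite /= addn_gt0 u_dot.
Qed.

Lemma monomial_in_gen3 u : (0 < deg_dot u)%N -> V (monomial u).
Proof.
have dotV w : V (eval_word (iota \o @dot X) w).
  by apply: gen3_eval_word => -[] x; exists x.
elim: u => [[x|x]|u IHu v IHv] //=; first by move=> _; apply: gen3G; exists x.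
rewrite addn_gt0; case: (posnP (deg_dot u)) => [u0|/IHu Vu];
  case: (posnP (deg_dot v)) => [v0|/IHv Vv] //= _.
- by rewrite -(phi_dot_monomial u0); apply: gen3L.
- by rewrite -(phi_dot_monomial v0); apply: gen3R.
- exact: gen3P.
Qed.

Lemma span_sub_gen3_dot a : W a -> V a.
Proof.
elim=> [|_ [u [u_dot ->]]|a1 a2 _ V1 _ V2|c a1 _ V1].
- exact: gen30.
- exact: monomial_in_gen3.
- exact: gen3D.
- exact: gen3Z.
Qed.

End DottedSubalgebra.

Theorem lemma3p2 (k : fieldType) (Ids : identities k)
  (Ids_polylin : forall n (p : napoly k n), Ids n p -> polylinear p)
  (X : Type) (F : naalg k) (iota : X + X -> F)
  (Ffree : is_free_var Ids iota)
  (phi : F -> F) (phi_hom : is_hom phi)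
  (phi_x : forall x, phi (iota (inl x)) = iota (inl x))
  (phi_xdot : forall x, phi (iota (inr x)) = iota (inl x)) :
  forall f : F,
    gen3 phi (fun g => exists x, g = iota (inr x)) f <->
    span_of (fun g => exists u : word (X + X), (0 < deg_dot u)%N /\ g = eval_word iota u) f.
Proof.
move=> f; split.
- exact: gen3_dot_sub_span.
- exact: span_sub_gen3_dot.
Qed.
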